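(* Let $F$ be a comparison graph on an array $A$ whose underlying undirected graph is a forest with $k$ components, each of which contains a directed Hamiltonian path. Let $H$ be the graph obtained by applying the merge step to $F$ with the list of roots of its components (in some order). If $k>1$, then $H$ has fewer than $k$ components; in fact, for any $k\ge1$, $H$ has exactly $\lceil k/2\rceil$ components.
   Context: An array is a finite sequence $A=(A[1],\dots,A[n])$ of pairwise distinct real numbers. A comparison graph on $A$ is a directed graph on $\{1,\dots,n\}$ all of whose arcs $(u,v)$ satisfy $A[u]<A[v]$. Components are connected components of the underlying undirected graph; a directed Hamiltonian path of a component is a directed path visiting each of its vertices exactly once; the root of a component is its minimum-valued vertex. Component merge of two distinct components $C,D$: set $p,q$ to the roots of $C,D$; while both are defined: if $A[p]<A[q]$ add the arc $(p,q)$ and replace $p$ by the smallest-valued out-neighbour of $p$ within $C$ (ignoring arcs added during this merge; undefined if none); otherwise add $(q,p)$ and replace $q$ analogously within $D$. Merge step with a root list $(\rho_1,\dots,\rho_k)$: component-merge the components of $\rho_{2j-1}$ and $\rho_{2j}$ for $j=1,\dots,\lfloor k/2\rfloor$. *)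

From HB Require Import structures.
From mathcomp Require Import all_boot all_order all_algebra.
Set Implicit Arguments. Unset Strict Implicit. Unset Printing Implicit Defensive.
Import Order.TTheory GRing.Theory Num.Theory.
Local Open Scope ring_scope.

(* Vertices are 'I_n (i.e. {0,...,n-1} instead of {1,...,n});
   a directed graph is its set of arcs. *)
Section Graphs.
Variables (R : realFieldType) (n : nat) (A : 'I_n -> R).
Notation V := 'I_n.
Notation graph := {set V * V}.

Definition comparison_graph (E : graph) : Prop :=
  forall u v, (u, v) \in E -> A u < A v.

Definition urel (E : graph) : rel V := fun u v => ((u, v) \in E) || ((v, u) \in E).

Definition comp (E : graph) (x : V) : {set V} := [set v | connect (urel E) x v].

Definition ncomp (E : graph) : nat := #|[set comp E x | x : V]|.

(* underlying undirected graph is a forest: no cycle on >= 3 distinct vertices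
   (there are no loops nor antiparallel arcs in a comparison graph) *)
Definition forest (E : graph) : Prop :=
  forall s : seq V, uniq s -> (3 <= size s)%N -> ~~ cycle (urel E) s.

Definition has_ham_path (E : graph) (x : V) : Prop :=
  exists s : seq V, [/\ uniq s, sorted (fun u v => (u, v) \in E) s &
                         forall v, (v \in s) = connect (urel E) x v].

Definition is_root (E : graph) (v : V) : Prop :=
  forall w, connect (urel E) v w -> A v <= A w.

Definition minpick (P : pred V) : option V :=
  [pick w | P w && [forall w', P w' ==> (A w <= A w')]].

Definition next_in (G0 : graph) (C : {set V}) (p : V) : option V :=
  minpick [pred w | ((p, w) \in G0) && (w \in C)].

(* the while-loop of component merge, with a fuel bound (the loop performs
   fewer than #|V| iterations, since each iteration moves p or q strictly
   upwards inside C or D) *)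
Fixpoint merge_loop (G0 : graph) (C D : {set V}) (fuel : nat)
    (p q : option V) (acc : graph) : graph :=
  match fuel with
  | 0 => acc
  | fuel'.+1 =>
    match p, q with
    | Some p', Some q' =>
      if A p' < A q' then
        merge_loop G0 C D fuel' (next_in G0 C p') q (acc :|: [set (p', q')])
      else
        merge_loop G0 C D fuel' p (next_in G0 D q') (acc :|: [set (q', p')])
    | _, _ => acc
    end
  end.

Definition component_merge (G : graph) (x y : V) : graph :=
  let C := comp G x in let D := comp G y in
  merge_loop G C D #|V| (minpick (mem C)) (minpick (mem D)) G.

Fixpoint merge_step (G : graph) (rs : seq V) : graph :=
  match rs with
  | x :: y :: rs' => merge_step (component_merge G x y) rs'
  | _ => G
  end.

End Graphs.

From Pilot Require Import Defs.
From HB Require Import structures.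
From mathcomp Require Import all_boot all_order all_algebra.
Import Order.TTheory GRing.Theory Num.Theory.
Set Implicit Arguments. Unset Strict Implicit.
Local Open Scope ring_scope.

(* Component merge of C and D always links them: both roots exist, so the
   first round of the loop adds an arc between them, and every arc it adds
   has both ends in C :|: D.  Hence it fuses exactly C and D and leaves the
   other components unchanged, lowering their number by one.  As A is
   injective, each component has exactly one root, so the root list names
   k pairwise distinct components; the merge step fuses floor(k/2) disjoint
   pairs of them and leaves k - floor(k/2) = ceil(k/2) components. *)

Section Components.
Variables (n : nat) (E : {set 'I_n * 'I_n}).

Lemma urel_sym : symmetric (urel E).
Proof. by move=> u v; rewrite /urel orbC. Qed.

Lemma connect_urel_sym : connect_sym (urel E).
Proof. exact/sym_connect_sym/urel_sym. Qed.

Lemma mem_comp x v : (v \in Defs.comp E x) = connect (urel E) x v.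
Proof. by rewrite inE. Qed.

Lemma comp_refl x : x \in Defs.comp E x.
Proof. by rewrite mem_comp connect0. Qed.

Lemma eq_comp x y : (Defs.comp E x == Defs.comp E y) = connect (urel E) x y.
Proof.
apply/eqP/idP => [exy|cxy]; first by rewrite -mem_comp exy comp_refl.
apply/setP => v; rewrite !mem_comp.
by apply/idP/idP; apply: connect_trans; rewrite // connect_urel_sym.
Qed.

Lemma connect_urel_sub (E' : {set 'I_n * 'I_n}) u v :
  E \subset E' -> connect (urel E) u v -> connect (urel E') u v.
Proof.
move=> subEE'; apply: connect_sub => {}u {}v /orP[] e; apply: connect1;
  by rewrite /urel (subsetP subEE' _ e) ?orbT.
Qed.

End Components.

Section Minima.
Variables (R : realFieldType) (n : nat) (A : 'I_n -> R).

Lemma minpick_mem (P : pred 'I_n) w : minpick A P = Some w -> P w.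
Proof. by rewrite /minpick; case: pickP => // w' /andP[Pw _] [<-]. Qed.

Lemma minpick_some (P : pred 'I_n) w0 : P w0 -> exists w, minpick A P = Some w.
Proof.
move=> Pw0; rewrite /minpick; case: pickP => [w _|none]; first by exists w.
have [w Pw minw] := arg_minP A Pw0.
suff: P w && [forall w', P w' ==> (A w <= A w')] by rewrite none.
by rewrite Pw; apply/forallP => w'; exact/implyP/minw.
Qed.

Lemma exists_root (E : {set 'I_n * 'I_n}) x :
  exists2 r, is_root A E r & connect (urel E) x r.
Proof.
have [r xr minr] := arg_minP A (connect0 (urel E) x).
by exists r => // w rw; apply/minr/(connect_trans xr rw).
Qed.

End Minima.

Section MergeTwoComponents.
Variables (n : nat) (G G' : {set 'I_n * 'I_n}) (x y : 'I_n).
Let C := Defs.comp G x.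
Let D := Defs.comp G y.
Let CD := C :|: D.
Hypothesis subGG' : G \subset G'.
Hypothesis new_arcs_in_CD :
  forall e, e \in G' -> e \in G \/ (e.1 \in CD /\ e.2 \in CD).
Hypothesis connect_xy : connect (urel G') x y.
Hypothesis neq_CD : C != D.

Lemma CD_closed u v : connect (urel G) u v -> u \in CD -> v \in CD.
Proof.
by move=> cuv; rewrite !inE => /orP[] cu; rewrite (connect_trans cu cuv) ?orbT.
Qed.

Lemma urel_merge u v :
  urel G' u v -> connect (urel G) u v || (u \in CD) && (v \in CD).
Proof.
by case/orP=> /new_arcs_in_CD [e|[/= e1 e2]];
  rewrite ?e1 ?e2 ?orbT // connect1 // /urel e ?orbT.
Qed.

Lemma connect_merge u v :
  connect (urel G') u v = connect (urel G) u v || (u \in CD) && (v \in CD).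
Proof.
apply/idP/idP => [/connectP [p up ->] {v}|].
  elim: p u up => [|w p IHp] u /=; first by rewrite connect0.
  case/andP=> /urel_merge cuw /IHp.
  case/orP: cuw => [cuw|/andP[uCD wCD]] /orP[cwz|/andP[wCD' zCD]].
  - by rewrite (connect_trans cuw cwz).
  - by rewrite zCD andbT (CD_closed _ wCD') ?orbT // connect_urel_sym.
  - by rewrite uCD (CD_closed cwz wCD) orbT.
  - by rewrite uCD zCD orbT.
case/orP => [/(connect_urel_sub subGG') //|/andP[uCD vCD]].
have xCD w : w \in CD -> connect (urel G') x w.
  rewrite !inE => /orP[] /(connect_urel_sub subGG') // cyw; exact: connect_trans cyw.
by apply: connect_trans (xCD _ vCD); rewrite connect_urel_sym xCD.
Qed.

Lemma comp_merge v : Defs.comp G' v = if v \in CD then CD else Defs.comp G v.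
Proof.
apply/setP => w; rewrite mem_comp connect_merge.
case: ifP => vCD; rewrite ?andbF ?orbF ?mem_comp //=.
by apply/idP/idP => [/orP[/CD_closed->|]|->]; rewrite ?orbT.
Qed.

Lemma comp_in_CD v : v \in CD -> Defs.comp G v = C \/ Defs.comp G v = D.
Proof.
by rewrite inE => /orP[] cv; [left|right];
  apply/eqP; rewrite eq_sym eq_comp -mem_comp.
Qed.

Lemma comp_notin_CD v :
  v \notin CD -> (Defs.comp G v != C) && (Defs.comp G v != D).
Proof.
apply: contraNT; rewrite negb_and !negbK => /orP[]/eqP cv;
  by rewrite /CD in_setU -cv comp_refl ?orbT.
Qed.

Lemma comp_neq_CD v : Defs.comp G v != CD.
Proof.
have yNC : y \notin C by rewrite mem_comp -eq_comp.
have xND : x \notin D by rewrite mem_comp connect_urel_sym -eq_comp.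
have [vCD|vNCD] := boolP (v \in CD); last first.
  by apply: contraNneq vNCD => <-; exact: comp_refl.
case: (comp_in_CD vCD) => ->; apply/eqP => /setP eqCD.
  by move: (eqCD y); rewrite in_setU comp_refl orbT (negbTE yNC).
by move: (eqCD x); rewrite in_setU comp_refl (negbTE xND).
Qed.

Lemma ncomp_merge : (ncomp G').+1 = ncomp G.
Proof.
set S := [set Defs.comp G v | v : 'I_n]; rewrite /ncomp -/S.
have -> : [set Defs.comp G' v | v : 'I_n] = CD |: (S :\ C :\ D).
  apply/setP => X; rewrite !inE; apply/imsetP/idP => [[v _ ->]|].
    rewrite comp_merge; case: ifPn => [_|/comp_notin_CD/andP[-> ->]].
      by rewrite eqxx.
    by rewrite imset_f ?orbT.
  case/orP => [/eqP ->|/and3P[XD XC /imsetP[v _ eX]]].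
    by exists x; rewrite // comp_merge inE comp_refl.
  subst X; exists v; rewrite // comp_merge; case: ifP => // /comp_in_CD[] cv.
  - by rewrite cv eqxx in XC.
  - by rewrite cv eqxx in XD.
have CD_notin_S : CD \notin S.
  by apply/imsetP => -[v _ /eqP]; rewrite eq_sym (negbTE (comp_neq_CD v)).
rewrite cardsU1 (cardsD1 C S) (cardsD1 D (S :\ C)) !inE !imset_f //.
by rewrite (negbTE CD_notin_S) !andbF eq_sym neq_CD.
Qed.

End MergeTwoComponents.

Section ComponentMerge.
Variables (R : realFieldType) (n : nat) (A : 'I_n -> R).
Implicit Types (G acc : {set 'I_n * 'I_n}) (C D : {set 'I_n}).

Lemma merge_loop_sub (G0 : {set 'I_n * 'I_n}) C D fuel p q acc :
  acc \subset merge_loop A G0 C D fuel p q acc.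
Proof.
elim: fuel p q acc => [|fuel IHfuel] [p|] [q|] acc //=.
by case: ifP => _; apply: subset_trans (IHfuel _ _ _); exact: subsetUl.
Qed.

Lemma next_in_mem (G0 : {set 'I_n * 'I_n}) C u v :
  next_in A G0 C u = Some v -> v \in C.
Proof. by move/minpick_mem/andP=> []. Qed.

Lemma merge_loop_arcs (G0 : {set 'I_n * 'I_n}) C D fuel p q acc e :
  (forall p', p = Some p' -> p' \in C) -> (forall q', q = Some q' -> q' \in D) ->
  e \in merge_loop A G0 C D fuel p q acc ->
  e \in acc \/ (e.1 \in C :|: D /\ e.2 \in C :|: D).
Proof.
elim: fuel p q acc => [|fuel IHfuel] [p|] [q|] acc //= pC qD; try by left.
have [pCD qCD] : p \in C :|: D /\ q \in C :|: D.
  by rewrite !in_setU (pC p) ?(qD q) ?orbT.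
case: ifP => _ /IHfuel[] //; try by move=> ? /next_in_mem.
all: try by right.
all: by rewrite in_setU => /orP[|/set1P->]; [left|right].
Qed.

Lemma merge_loop_first_arc (G0 : {set 'I_n * 'I_n}) C D fuel p q acc :
  urel (merge_loop A G0 C D fuel.+1 (Some p) (Some q) acc) p q.
Proof.
rewrite /urel /=; case: ifP => _; apply/orP; [left|right];
  by apply: (subsetP (merge_loop_sub _ _ _ _ _ _ _)); rewrite in_setU set11 orbT.
Qed.

Lemma minpick_comp G x :
  exists2 r, minpick A (mem (Defs.comp G x)) = Some r & connect (urel G) x r.
Proof.
have [r pick_r] := minpick_some A (comp_refl G x).
by exists r => //; rewrite -mem_comp; exact: (minpick_mem pick_r).
Qed.

Lemma component_merge_sub G x y : G \subset component_merge A G x y.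
Proof. exact: merge_loop_sub. Qed.

Lemma component_merge_arcs G x y e :
  let CD := Defs.comp G x :|: Defs.comp G y in
  e \in component_merge A G x y -> e \in G \/ (e.1 \in CD /\ e.2 \in CD).
Proof. by apply: merge_loop_arcs => ? /minpick_mem. Qed.

Lemma component_merge_connect G x y : connect (urel (component_merge A G x y)) x y.
Proof.
have [p pick_p xp] := minpick_comp G x; have [q pick_q yq] := minpick_comp G y.
rewrite /component_merge pick_p pick_q.
case E: #|'I_n| => [|fuel]; first by move: (ltn_ord x); rewrite -{2}(card_ord n) E.
have subGH :=
  merge_loop_sub G (Defs.comp G x) (Defs.comp G y) fuel.+1 (Some p) (Some q) G.
apply: connect_trans (connect_urel_sub subGH xp) _.
apply: connect_trans (connect1 (merge_loop_first_arc _ _ _ _ _ _ _)) _.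
by rewrite connect_urel_sym; apply: connect_urel_sub subGH yq.
Qed.

Lemma ncomp_component_merge (G : {set 'I_n * 'I_n}) x y :
  Defs.comp G x != Defs.comp G y ->
  (ncomp (component_merge A G x y)).+1 = ncomp G.
Proof.
apply: ncomp_merge; [exact: component_merge_sub|exact: component_merge_arcs|].
exact: component_merge_connect.
Qed.

Lemma comp_component_merge_out (G : {set 'I_n * 'I_n}) x y v :
  Defs.comp G x != Defs.comp G v -> Defs.comp G y != Defs.comp G v ->
  Defs.comp (component_merge A G x y) v = Defs.comp G v.
Proof.
move=> xv yv; rewrite (comp_merge (component_merge_sub G x y)
  (@component_merge_arcs G x y) (component_merge_connect G x y)).
by rewrite in_setU !mem_comp -!eq_comp (negbTE xv) (negbTE yv).
Qed.

Lemma ncomp_merge_step (G : {set 'I_n * 'I_n}) (rs : seq 'I_n) :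
  uniq (map (Defs.comp G) rs) ->
  (ncomp (merge_step A G rs) + (size rs)./2)%N = ncomp G.
Proof.
have [m] := ubnP (size rs); elim: m rs G => // m IHm [|x [|y rs]] G /= size_rs;
  rewrite ?addn0 // => /andP[xNrs /andP[yNrs uniq_rs]].
rewrite inE negb_or in xNrs; case/andP: xNrs => neq_xy xNrs.
have same_comps :
    [seq Defs.comp (component_merge A G x y) r | r <- rs] = map (Defs.comp G) rs.
  apply/eq_in_map => r r_rs; apply: comp_component_merge_out.
  - by apply: contraNneq xNrs => ->; exact: map_f.
  - by apply: contraNneq yNrs => ->; exact: map_f.
have size_rs' : (size rs < m)%N by move: size_rs; rewrite /= !ltnS => /ltnW.
have := IHm rs (component_merge A G x y) size_rs'.
rewrite same_comps -(ncomp_component_merge neq_xy) => /(_ uniq_rs) <-.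
by rewrite addnS.
Qed.

End ComponentMerge.

Section Roots.
Variables (R : realFieldType) (n : nat) (A : 'I_n -> R).
Variables (F : {set 'I_n * 'I_n}) (rs : seq 'I_n).
Hypothesis inj_A : injective A.
Hypothesis rs_roots : forall v, v \in rs <-> is_root A F v.
Hypothesis uniq_rs : uniq rs.

Lemma connected_roots_eq r1 r2 :
  is_root A F r1 -> is_root A F r2 -> connect (urel F) r1 r2 -> r1 = r2.
Proof.
move=> root1 root2 c12; apply: inj_A; apply/eqP.
by rewrite eq_le root1 // root2 // connect_urel_sym.
Qed.

Lemma uniq_comp_roots : uniq (map (Defs.comp F) rs).
Proof.
rewrite map_inj_in_uniq // => r1 r2 /rs_roots root1 /rs_roots root2 /eqP.
by rewrite eq_comp; exact: connected_roots_eq.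
Qed.

Lemma ncomp_roots : ncomp F = size rs.
Proof.
rewrite /ncomp -(size_map (Defs.comp F)) -(card_uniqP uniq_comp_roots).
apply: eq_card => X; apply/imsetP/mapP => [[v _ ->]|[r _ ->]]; last by exists r.
have [r /rs_roots r_rs vr] := exists_root A F v.
by exists r => //; apply/eqP; rewrite eq_comp.
Qed.

End Roots.

Theorem lemma3 (R : realFieldType) (n : nat) (A : 'I_n -> R)
    (F : {set 'I_n * 'I_n}) (rs : seq 'I_n) :
  injective A ->
  comparison_graph A F ->
  forest F ->
  (forall x, has_ham_path F x) ->
  uniq rs ->
  (forall v, v \in rs <-> is_root A F v) ->
  let k := ncomp F in
  let H := merge_step A F rs in
  ((1 < k)%N -> (ncomp H < k)%N) /\ ncomp H = uphalf k.
Proof.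
move=> inj_A _ _ _ uniq_rs rs_roots k H.
have count_H := ncomp_merge_step A (uniq_comp_roots inj_A rs_roots uniq_rs).
rewrite -(ncomp_roots inj_A rs_roots uniq_rs) -/k -/H in count_H.
have ncomp_H : ncomp H = uphalf k.
  by apply: (@addIn k./2); rewrite count_H uphalf_half -addnA addnn odd_double_half.
split=> // k_gt1; by rewrite ncomp_H ltn_uphalf_double -addnn -addn1 ltn_add2l.
Qed.
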